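(* Let $p$ be a prime, let $n\geqslant 2$ be an integer, let $m\geqslant 1$ be an integer and let $k\geqslant 2$ be an integer not divisible by $p$. For positive integers $a,r$ let $w(a,r)=\frac{1}{r}\sum_{d\mid r}\mu(d)\,a^{r/d}$, where $\mu$ is the Möbius function. For $i=0,1,\dots,m$ define $$a_i = \frac{w(n,p^{m-i}k)^{p^i}}{p^i\, w(n,p^mk)}.$$ Then: (i) for $i=2,3,\dots,m-1$, we have $a_i/a_{i-1}\leqslant 1$; (ii) $a_1 \leqslant 2/(p^{m-1}k)^{p-1}$ and $a_m \leqslant 2/k^{p^m-1}$. *)

From mathcomp Require Import all_boot all_order all_algebra.
Set Implicit Arguments. Unset Strict Implicit. Unset Printing Implicit Defensive.
Import Order.TTheory GRing.Theory Num.Theory.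
Local Open Scope ring_scope.

Definition moebius (d : nat) : int :=
  if all (fun q => logn q d == 1%N) (primes d)
  then (-1) ^+ size (primes d) else 0.

Definition necklace_w (a r : nat) : rat :=
  (r%:R)^-1 * \sum_(d <- divisors r) (moebius d)%:~R * (a ^ (r %/ d))%:R.

Definition coef_a (p n m k i : nat) : rat :=
  (necklace_w n (p ^ (m - i) * k)) ^+ (p ^ i) /
  ((p ^ i)%:R * necklace_w n (p ^ m * k)).

From mathcomp Require Import all_boot all_order all_algebra.
From mathcomp Require Import zify ring lra.
Import Order.TTheory GRing.Theory Num.Theory.
Set Implicit Arguments. Unset Strict Implicit.
Local Open Scope ring_scope.

(* Write S(r) = r w(n,r) = sum_{d | r} mu(d) n^(r/d).  The term d = 1 is n^r;
   every other term is +-n^e with e a proper divisor of r, hence e <= t := r/q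
   where q is the least prime factor of r.  Since sum_{e<t} n^e < n^t, this
   gives n^r/2 <= S(r), and S(r) <= n^r because the term d = q, which is
   -n^t, absorbs all the positive terms with e < t.  Thus
   n^r/(2r) <= w(n,r) <= n^r/r, and for R >= 2 one gets
   w(n,R)^s <= (2s / R^(s-1)) w(n,Rs).  With R = p^(m-i) k and s = p^i this is
   (ii); with s = p and R >= 2p the factor is at most 1, so w(n,R)^p <= w(n,pR),
   which yields a_i <= a_(i-1). *)

Lemma moebius1 : moebius 1 = 1.
Proof. by []. Qed.

Lemma moebius_prime q : prime q -> moebius q = -1.
Proof. by move=> q_pr; rewrite /moebius primes_prime //= logn_prime // eqxx. Qed.

Lemma moebius_bound d : -1 <= ((moebius d)%:~R : rat) <= 1.
Proof.
rewrite /moebius; case: ifP => _; first rewrite -signr_odd; last by rewrite /=; lra.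
by case: (odd _); rewrite /= ?expr1 ?expr0; lra.
Qed.

Lemma divn_compl r d : (0 < r)%N -> (d %| r)%N -> (r %/ (r %/ d))%N = d.
Proof. by move=> r_gt0 d_r; rewrite divnA // mulKn. Qed.

Lemma divisorsE r : (0 < r)%N ->
  divisors r = [seq e <- index_iota 0 r.+1 | (e %| r)%N].
Proof.
move=> r_gt0; apply: (irr_sorted_eq ltn_trans ltnn (sorted_divisors_ltn r)).
  by rewrite sorted_filter /index_iota ?iota_ltn_sorted //; exact: ltn_trans.
move=> e; rewrite mem_filter mem_index_iota -dvdn_divisors //.
by case: (boolP (e %| r)%N) => //= e_r; rewrite ltnS dvdn_leq.
Qed.

Lemma big_divisors_compl (R : Type) (idx : R) (op : Monoid.com_law idx)
    r (F : nat -> R) : (0 < r)%N ->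
  \big[op/idx]_(d <- divisors r) F (r %/ d)%N = \big[op/idx]_(d <- divisors r) F d.
Proof.
move=> r_gt0; rewrite -(big_map (divn r) xpredT); apply: perm_big; rewrite perm_sym.
have compl_in d : d \in divisors r -> (r %/ d)%N \in divisors r.
  by rewrite -!dvdn_divisors //; exact: dvdn_div.
have complK : {in divisors r, cancel (divn r) (divn r)}.
  by move=> d; rewrite -dvdn_divisors // => /(divn_compl r_gt0).
apply: uniq_perm; first exact: divisors_uniq.
  by rewrite (map_inj_in_uniq (can_in_inj complK)) divisors_uniq.
move=> d; apply/idP/mapP => [d_r | [e e_r ->]]; last exact: compl_in.
by exists (r %/ d)%N; rewrite ?compl_in ?complK.
Qed.

Lemma dvdn_leq_pdiv r e : (0 < r)%N -> (e %| r)%N -> (e < r)%N ->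
  (e <= r %/ pdiv r)%N.
Proof.
move=> r_gt0 e_r e_lt_r; have e_gt0 : (0 < e)%N by apply: dvdn_gt0 e_r.
have q_le : (pdiv r <= r %/ e)%N.
  by apply: pdiv_min_dvd; rewrite ?dvdn_div // ltn_divRL // mul1n.
by rewrite leq_divRL ?pdiv_gt0 // -[leqRHS](divnK e_r) mulnC leq_mul2r q_le orbT.
Qed.

Lemma ltn_div_pdiv r : (1 < r)%N -> (r %/ pdiv r < r)%N.
Proof. by move=> r_gt1; rewrite ltn_Pdiv ?prime_gt1 ?pdiv_prime //; lia. Qed.

Lemma big_proper_divisors (R : Type) (idx : R) (op : R -> R -> R)
    r (F : nat -> R) : (1 < r)%N ->
  \big[op/idx]_(0 <= e < r | (e %| r)%N) F e =
  \big[op/idx]_(0 <= e < (r %/ pdiv r).+1 | (e %| r)%N) F e.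
Proof.
move=> r_gt1; rewrite [RHS](big_nat_widen _ _ r) ?ltn_div_pdiv //.
rewrite big_nat_cond [RHS]big_nat_cond.
apply: eq_bigl => e; case: (ltnP e r) => //= e_lt_r.
by case: (boolP (e %| r)%N) => //= e_r; rewrite ltnS dvdn_leq_pdiv //; lia.
Qed.

Lemma sum_expn_le n h : (1 < n)%N ->
  \sum_(0 <= e < h) (n ^ e)%:R <= (n ^ h)%:R - 1 :> rat.
Proof.
move=> n_gt1; rewrite -natr_sum lerBrDr natr1 ler_nat.
have := predn_exp n h; rewrite big_mkord => pred_nh.
have nh_gt0 : (0 < n ^ h)%N by rewrite expn_gt0; lia.
by rewrite -(prednK nh_gt0) ltnS pred_nh leq_pmull //; lia.
Qed.

Definition aperiodic_words (n r : nat) : rat :=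
  \sum_(d <- divisors r) (moebius d)%:~R * (n ^ (r %/ d))%:R.

Lemma necklace_wE n r : necklace_w n r = (r%:R)^-1 * aperiodic_words n r.
Proof. by []. Qed.

Lemma aperiodic_wordsE n r : (0 < r)%N ->
  aperiodic_words n r = (n ^ r)%:R +
    \sum_(0 <= e < r | (e %| r)%N) (moebius (r %/ e))%:~R * (n ^ e)%:R.
Proof.
move=> r_gt0; rewrite /aperiodic_words -big_divisors_compl // divisorsE //.
rewrite big_filter; under eq_bigr => e e_r do rewrite divn_compl //.
by rewrite big_mkcond big_nat_recr //= dvdnn divnn r_gt0 moebius1 mul1r -big_mkcond addrC.
Qed.

Lemma aperiodic_words_ge n r : (1 < n)%N -> (1 < r)%N ->
  (n ^ r)%:R - (n ^ (r %/ pdiv r).+1)%:R + 1 <= aperiodic_words n r.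
Proof.
move=> n_gt1 r_gt1; set t := (r %/ pdiv r)%N.
rewrite aperiodic_wordsE 1?big_proper_divisors -/t; try lia.
have lower : - \sum_(0 <= e < t.+1) (n ^ e)%:R <=
    \sum_(0 <= e < t.+1 | (e %| r)%N) (moebius (r %/ e))%:~R * (n ^ e)%:R :> rat.
  rewrite -sumrN [leRHS]big_mkcond ler_sum // => e _.
  case: ifP => _; last by rewrite oppr_le0 ler0n.
  have /andP[mu_ge _] := moebius_bound (r %/ e).
  by rewrite -mulN1r ler_wpM2r ?ler0n.
have := sum_expn_le t.+1 n_gt1; clearbody t; lra.
Qed.

Lemma aperiodic_words_le n r : (1 < n)%N -> (1 < r)%N ->
  aperiodic_words n r <= (n ^ r)%:R.
Proof.
move=> n_gt1 r_gt1; set t := (r %/ pdiv r)%N.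
have t_r : (t %| r)%N by apply/dvdn_div/pdiv_dvd.
rewrite aperiodic_wordsE 1?big_proper_divisors -/t; try lia.
rewrite gerDl big_mkcond big_nat_recr //= t_r divn_compl ?pdiv_dvd //; last lia.
rewrite moebius_prime ?pdiv_prime // mulN1r -big_mkcond /=.
have upper : \sum_(0 <= e < t | (e %| r)%N) (moebius (r %/ e))%:~R * (n ^ e)%:R <=
    \sum_(0 <= e < t) (n ^ e)%:R :> rat.
  rewrite big_mkcond ler_sum // => e _; case: ifP => _; last exact: ler0n.
  have /andP[_ mu_le] := moebius_bound (r %/ e).
  by rewrite -[leRHS]mul1r ler_wpM2r ?ler0n.
have := sum_expn_le t n_gt1; clearbody t; lra.
Qed.

Lemma necklace_w_gt0 n r : (1 < n)%N -> (1 < r)%N -> 0 < necklace_w n r.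
Proof.
move=> n_gt1 r_gt1; rewrite necklace_wE mulr_gt0 ?invr_gt0 ?ltr0n 1?ltnW //.
have : (n ^ (r %/ pdiv r).+1 <= n ^ r)%N by rewrite leq_pexp2l ?ltn_div_pdiv //; lia.
rewrite -(ler_nat rat); have := aperiodic_words_ge n_gt1 r_gt1; lra.
Qed.

Lemma necklace_w_le n r : (1 < n)%N -> (1 < r)%N ->
  necklace_w n r <= (n ^ r)%:R / r%:R.
Proof.
move=> n_gt1 r_gt1; rewrite necklace_wE mulrC ler_pM2r ?invr_gt0 ?ltr0n; last lia.
exact: aperiodic_words_le.
Qed.

Lemma necklace_w_ge n r : (1 < n)%N -> (2 < r)%N ->
  (n ^ r)%:R / (2 * r%:R) <= necklace_w n r.
Proof.
move=> n_gt1 r_gt2; have r_gt1 : (1 < r)%N by lia.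
have r_neq0 : (r%:R : rat) != 0 by rewrite pnatr_eq0; lia.
have quot_add2_le : ((r %/ pdiv r).+2 <= r)%N.
  have := divnK (pdiv_dvd r); have := prime_gt1 (pdiv_prime r_gt1).
  have := pdiv_min_dvd (ltnW r_gt2) (dvdnn r); nia.
have : (2 * n ^ (r %/ pdiv r).+1 <= n ^ r)%N.
  apply: leq_trans (_ : n ^ (r %/ pdiv r).+2 <= _)%N; last by rewrite leq_pexp2l //; lia.
  by rewrite [leqRHS]expnS leq_mul2r n_gt1 orbT.
rewrite -(ler_nat rat) natrM => two_le.
rewrite necklace_wE ler_pdivrMr ?mulr_gt0 ?ltr0n //; try lia.
have -> : (r%:R)^-1 * aperiodic_words n r * (2 * r%:R) = 2 * aperiodic_words n r.
  by field.
have := aperiodic_words_ge n_gt1 r_gt1; lra.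
Qed.

Lemma necklace_w_expn_le n R s : (1 < n)%N -> (1 < R)%N -> (2 < R * s)%N ->
  necklace_w n R ^+ s <= 2 * s%:R / R%:R ^+ (s - 1) * necklace_w n (R * s).
Proof.
move=> n_gt1 R_gt1 Rs_gt2; have s_gt0 : (0 < s)%N by case: s Rs_gt2; rewrite ?muln0.
set A : rat := (n ^ R)%:R.
have R_neq0 : (R%:R : rat) != 0 by rewrite pnatr_eq0; lia.
have s_neq0 : (s%:R : rat) != 0 by rewrite pnatr_eq0; lia.
have wR_gt0 := necklace_w_gt0 n_gt1 R_gt1.
have wR_le := necklace_w_le n_gt1 R_gt1.
apply: (@le_trans _ _ ((A / R%:R) ^+ s)).
  by apply: lerXn2r; rewrite // nnegrE; [exact: ltW | exact: le_trans (ltW wR_gt0) wR_le].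
have RsE : (R%:R : rat) ^+ s = R%:R ^+ (s - 1) * R%:R by rewrite -exprSr subn1 prednK.
have -> : (A / R%:R) ^+ s = 2 * s%:R / R%:R ^+ (s - 1) * (A ^+ s / (2 * (R * s)%:R)).
  by rewrite expr_div_n RsE natrM; field; rewrite R_neq0 s_neq0 expf_neq0.
rewrite ler_wpM2l ?divr_ge0 ?mulr_ge0 ?exprn_ge0 ?ler0n // /A -natrX -expnM.
exact: necklace_w_ge.
Qed.

Lemma coef_a_gt0 p n m k i : prime p -> (1 < n)%N -> (1 < k)%N ->
  0 < coef_a p n m k i.
Proof.
move=> p_pr n_gt1 k_gt1; have p_gt0 := prime_gt0 p_pr.
have pk_gt1 j : (1 < p ^ j * k)%N.
  by rewrite (leq_trans k_gt1) // leq_pmull // expn_gt0 p_gt0.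
have w_gt0 j := necklace_w_gt0 n_gt1 (pk_gt1 j).
rewrite /coef_a; apply: divr_gt0; first exact: exprn_gt0.
by apply: mulr_gt0; rewrite ?ltr0n ?expn_gt0 ?p_gt0.
Qed.

Lemma coef_a_le p n m k i : prime p -> (1 < n)%N -> (0 < m)%N -> (1 < k)%N ->
  (i <= m)%N -> coef_a p n m k i <= 2 / ((p ^ (m - i) * k) ^ (p ^ i - 1))%:R.
Proof.
move=> p_pr n_gt1 m_gt0 k_gt1 i_le_m; have p_gt1 := prime_gt1 p_pr.
set R := (p ^ (m - i) * k)%N; set s := (p ^ i)%N.
have R_gt1 : (1 < R)%N by rewrite (leq_trans k_gt1) // leq_pmull // expn_gt0; lia.
have RsE : (p ^ m * k = R * s)%N by rewrite /R /s mulnAC -expnD subnK.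
have Rs_gt2 : (2 < R * s)%N.
  rewrite -RsE; have : (p <= p ^ m)%N by rewrite -{1}(expn1 p) leq_pexp2l; lia.
  nia.
have W_gt0 := necklace_w_gt0 n_gt1 (ltnW Rs_gt2).
have s_gt0 : (0 : rat) < s%:R by rewrite ltr0n expn_gt0; lia.
rewrite /coef_a -/R -/s RsE natrX ler_pdivrMr; last exact: mulr_gt0.
apply: le_trans (necklace_w_expn_le n_gt1 R_gt1 Rs_gt2) _.
by rewrite [leRHS]mulrA [2 * s%:R / _]mulrAC.
Qed.

Lemma coef_a_le_pred p n m k i : prime p -> (1 < n)%N -> (1 < k)%N ->
  (0 < i)%N -> (i < m)%N -> coef_a p n m k i <= coef_a p n m k i.-1.
Proof.
move=> p_pr n_gt1 k_gt1 i_gt0 i_lt_m; have p_gt1 := prime_gt1 p_pr.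
set R := (p ^ (m - i) * k)%N; set s := (p ^ i.-1)%N.
have R_ge : (2 * p <= R)%N.
  have : (p <= p ^ (m - i))%N by rewrite -{1}(expn1 p) leq_pexp2l; lia.
  rewrite /R; nia.
(* The factor 2p / R^(p-1) of necklace_w_expn_le is at most 1 because R >= 2p. *)
have wR_le : necklace_w n R ^+ p <= necklace_w n (R * p).
  apply: le_trans (necklace_w_expn_le n_gt1 _ _) _; try nia.
  apply: ler_piMl; first by apply/ltW/necklace_w_gt0; nia.
  rewrite ler_pdivrMr ?exprn_gt0 ?ltr0n ?mul1r; try lia.
  rewrite -natrM -natrX ler_nat (leq_trans R_ge) // -{1}(expn1 R) leq_pexp2l; lia.
have RpE : (p ^ (m - i.-1) * k = R * p)%N.
  by rewrite /R mulnAC -expnSr; have -> : (m - i.-1 = (m - i).+1)%N by lia.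
have sE : (p ^ i = p * s)%N by rewrite -expnS prednK.
rewrite /coef_a -/R RpE sE -/s exprM natrM.
set X := necklace_w n R; set Y := necklace_w n (R * p).
set W := necklace_w n (p ^ m * k).
have X_gt0 : 0 < X by apply: necklace_w_gt0; lia.
have W_gt0 : 0 < W.
  by apply: (necklace_w_gt0 n_gt1); rewrite (leq_trans k_gt1) // leq_pmull // expn_gt0; lia.
have p_gt0 : (0 : rat) < p%:R by rewrite ltr0n; lia.
have s_gt0 : (0 : rat) < s%:R by rewrite ltr0n expn_gt0; lia.
have sW_gt0 : 0 < s%:R * W by exact: mulr_gt0.
have -> : X ^+ p ^+ s / (p%:R * s%:R * W) = p%:R^-1 * (X ^+ p ^+ s / (s%:R * W)).
  by field; rewrite !gt_eqF.
apply: le_trans (_ : _ <= X ^+ p ^+ s / (s%:R * W)) _.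
  apply: ler_piMl; first by rewrite divr_ge0 ?exprn_ge0 ?ltW.
  by rewrite invf_le1 // ler1n; lia.
apply: ler_wpM2r; first by rewrite invr_ge0 ltW.
have Xp_ge0 : 0 <= X ^+ p by rewrite exprn_ge0 // ltW.
by apply: lerXn2r; rewrite // nnegrE //; exact: le_trans Xp_ge0 wR_le.
Qed.

Theorem corollary2p4 (p n m k : nat) :
  prime p -> (2 <= n)%N -> (1 <= m)%N -> (2 <= k)%N -> ~~ (p %| k)%N ->
  (forall i : nat, (2 <= i)%N -> (i <= m - 1)%N ->
     coef_a p n m k i / coef_a p n m k i.-1 <= 1)
  /\ coef_a p n m k 1 <= 2 / ((p ^ (m - 1) * k) ^ (p - 1))%:R
  /\ coef_a p n m k m <= 2 / (k ^ (p ^ m - 1))%:R.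
Proof.
move=> p_pr n_gt1 m_gt0 k_gt1 _; split; [|split].
- move=> i i_ge2 i_lt_m; rewrite ler_pdivrMr; last exact: coef_a_gt0.
  by rewrite mul1r; apply: (coef_a_le_pred p_pr n_gt1 k_gt1); lia.
- by have := coef_a_le p_pr n_gt1 m_gt0 k_gt1 m_gt0; rewrite expn1.
- by have := coef_a_le p_pr n_gt1 m_gt0 k_gt1 (leqnn m); rewrite subnn mul1n.
Qed.
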